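(* Let $C_i, C_j, C_k$ be three pairwise disjoint closed circular discs in $\mathbb{R}^2$ with non-collinear centers (in non-degenerate position). Then the feasible region $S_{i,j}\cap S_{j,k}\cap S_{i,k}$ is a convex polygon with at least $4$ and at most $6$ vertices; in particular it is never a triangle.
   Context: For two disjoint closed discs $C_a, C_b$ with centers $c_a,c_b$, let $p_a, p_b$ be the points where the segment $\overline{c_ac_b}$ meets the boundary circles of $C_a$ and $C_b$ respectively, and let $l_a, l_b$ be the lines through $p_a$, $p_b$ perpendicular to $\overline{c_ac_b}$. The slab $S_{a,b}$ is the closed region between the parallel lines $l_a$ and $l_b$. For three pairwise disjoint discs $C_i,C_j,C_k$, the feasible region is $S_{i,j}\cap S_{j,k}\cap S_{i,k}$. *)

From HB Require Import structures.
From mathcomp Require Import all_boot all_order all_algebra.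
From mathcomp Require Import reals.
Set Implicit Arguments. Unset Strict Implicit. Unset Printing Implicit Defensive.
Import Order.TTheory GRing.Theory Num.Theory.
Local Open Scope ring_scope.

Section Plane.
Variable R : realType.

Definition pt := (R * R)%type.

Definition padd (x y : pt) : pt := (x.1 + y.1, x.2 + y.2).
Definition psub (x y : pt) : pt := (x.1 - y.1, x.2 - y.2).
Definition pscale (t : R) (x : pt) : pt := (t * x.1, t * x.2).
Definition dot (x y : pt) : R := x.1 * y.1 + x.2 * y.2.
Definition pnorm (x : pt) : R := Num.sqrt (dot x x).
Definition cross (x y : pt) : R := x.1 * y.2 - x.2 * y.1.

Definition disc (c : pt) (r : R) : pt -> Prop :=
  fun x => pnorm (psub x c) <= r.

(* The point where the segment [c_a, c_b] meets the boundary circle of the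
   disc (c_a, r_a). *)
Definition boundary_pt (ca : pt) (ra : R) (cb : pt) : pt :=
  padd ca (pscale (ra / pnorm (psub cb ca)) (psub cb ca)).

(* Line through p perpendicular to direction u: { x | <x - p, u> = 0 }.
   The closed region between the two parallel lines l_a, l_b (both
   perpendicular to u = c_b - c_a) is the set of points whose signed
   positions relative to the two lines have opposite signs (or vanish). *)
Definition slab (ca : pt) (ra : R) (cb : pt) (rb : R) : pt -> Prop :=
  let u := psub cb ca in
  let pa := boundary_pt ca ra cb in
  let pb := boundary_pt cb rb ca in
  fun x => dot (psub x pa) u * dot (psub x pb) u <= 0.

Definition extreme_point (S : pt -> Prop) (x : pt) : Prop :=
  S x /\ forall y z (t : R), S y -> S z -> 0 < t < 1 ->
    x = padd (pscale (1 - t) y) (pscale t z) -> y = x /\ z = x.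

Definition conv_hull (V : seq pt) : pt -> Prop :=
  fun x => exists w : 'I_(size V) -> R,
    (forall i, 0 <= w i) /\ \sum_(i < size V) w i = 1 /\
    x = (\sum_(i < size V) w i * (nth x V i).1,
         \sum_(i < size V) w i * (nth x V i).2).

Definition convex_polygon_with (S : pt -> Prop) (n : nat) : Prop :=
  exists V : seq pt, uniq V /\ size V = n /\
    (forall x, S x <-> conv_hull V x) /\
    (forall x, extreme_point S x <-> x \in V).

End Plane.

From HB Require Import structures.
From mathcomp Require Import all_boot all_order all_algebra.
From mathcomp Require Import reals.
From mathcomp Require Import ring lra.
Import Order.TTheory GRing.Theory Num.Theory.
Local Open Scope ring_scope.

(* Use the affine coordinates
     y1 = <x - c_i, c_j - c_i> - r_i |c_j - c_i|,
     y2 = <x - c_j, c_k - c_j> - r_j |c_k - c_j|,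
   invertible because the centres are not collinear.  The slabs S_ij and S_jk
   become 0 <= y1 <= w1 and 0 <= y2 <= w2, and since
   c_k - c_i = (c_j - c_i) + (c_k - c_j) the slab S_ik becomes a diagonal strip
   L <= y1 + y2 <= U.  A box cut by a diagonal strip is a convex polygon with at
   most six vertices, and it has at least four unless the strip cuts off a
   triangle at the corner (w1, w2) or (0, 0) of the box.  Expressed through the
   excesses of the tangent lengths of the triangle c_i c_j c_k over the radii,
   both triangles are excluded by the disjointness of the discs. *)

Section ConvexHull.
Variable R : realType.
Implicit Types (V : seq (pt R)) (x y z : pt R).

Definition hull_weights V x (w : 'I_(size V) -> R) :=
  [/\ forall i, 0 <= w i, \sum_(i < size V) w i = 1 &
    x = (\sum_(i < size V) w i * (nth (0, 0) V i).1,
         \sum_(i < size V) w i * (nth (0, 0) V i).2)].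

Lemma conv_hullP V x : conv_hull V x <-> exists w, hull_weights V x w.
Proof.
have nth_def d w (f : pt R -> R) :
    \sum_(i < size V) w i * f (nth d V i) = \sum_(i < size V) w i * f (nth (0, 0) V i).
  by apply: eq_bigr => i _; rewrite (set_nth_default (0, 0)).
split=> -[w].
  by move=> [w0 [w1 ->]]; exists w; split; rewrite // !nth_def.
by move=> [w0 w1 ->]; exists w; split; rewrite // !nth_def.
Qed.

Lemma conv_hull_mem V x : x \in V -> conv_hull V x.
Proof.
move=> xV; apply/conv_hullP.
have jV : (index x V < size V)%N by rewrite index_mem.
pose j := Ordinal jV.
have sum_dirac (F : 'I_(size V) -> R) :
    \sum_(i < size V) (i == j)%:R * F i = F j.
  by rewrite (bigD1 j) //= eqxx mul1r big1 ?addr0 // => i /negbTE ->; rewrite mul0r.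
exists (fun i => (i == j)%:R); split.
- by move=> i; rewrite ler0n.
- by rewrite (eq_bigr (fun i => (i == j)%:R * 1)) ?sum_dirac // => i _; rewrite mulr1.
- by rewrite !sum_dirac nth_index //; case: (x).
Qed.

Lemma conv_hull_halfplane V x (a b c : R) :
  (forall v, v \in V -> a * v.1 + b * v.2 <= c) ->
  conv_hull V x -> a * x.1 + b * x.2 <= c.
Proof.
move=> Vc /conv_hullP [w [w0 w1 ->]] /=.
rewrite !mulr_sumr -big_split -[c]mul1r -w1 mulr_suml /=.
apply: ler_sum => i _; have := Vc _ (mem_nth (0, 0) (ltn_ord i)).
set v := nth _ V i => vc.
have -> : a * (w i * v.1) + b * (w i * v.2) = w i * (a * v.1 + b * v.2) by ring.
by rewrite ler_wpM2l.
Qed.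

Lemma conv_hull_convex V y z (t : R) : conv_hull V y -> conv_hull V z ->
  0 <= t <= 1 -> conv_hull V (padd (pscale (1 - t) y) (pscale t z)).
Proof.
move=> /conv_hullP [wy [y0 y1 ->]] /conv_hullP [wz [z0 z1 ->]] /andP [t0 t1].
apply/conv_hullP; exists (fun i => (1 - t) * wy i + t * wz i); split.
- by move=> i; apply: addr_ge0; apply: mulr_ge0 => //; lra.
- by rewrite big_split /= -!mulr_sumr y1 z1; ring.
- rewrite /padd /pscale /=; congr (_, _);
    by rewrite !mulr_sumr -big_split /=; apply: eq_bigr => i _; ring.
Qed.

(* [x] is the point [a + num / den * (b - a)] of the segment [a, b], stated
   without division. *)
Lemma conv_hull_between V a b x (num den : R) :
  conv_hull V a -> conv_hull V b -> 0 <= num -> num <= den -> 0 < den ->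
  (x.1 - a.1) * den = num * (b.1 - a.1) -> (x.2 - a.2) * den = num * (b.2 - a.2) ->
  conv_hull V x.
Proof.
move=> Va Vb num0 num_den den0 e1 e2.
have t01 : 0 <= num / den <= 1.
  by rewrite divr_ge0 ?ler_pdivrMr ?mul1r //=; lra.
have den_neq0 : den != 0 by rewrite gt_eqF.
suff -> : x = padd (pscale (1 - num / den) a) (pscale (num / den) b).
  exact: conv_hull_convex.
rewrite /padd /pscale [x]surjective_pairing /=; congr (_, _).
  by rewrite -[x.1](subrK a.1) -[_ - _](mulfK den_neq0) e1; field.
by rewrite -[x.2](subrK a.2) -[_ - _](mulfK den_neq0) e2; field.
Qed.

Lemma hull_weights_gt0 V x w : hull_weights V x w -> exists j, 0 < w j.
Proof.
move=> [w0 w1 _]; apply/existsP; apply: contraT; rewrite negb_exists => /forallP w_le0.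
have : \sum_(i < size V) w i <= \sum_(i < size V) (0 : R).
  by apply: ler_sum => i _; rewrite leNgt w_le0.
by rewrite big1_eq w1; lra.
Qed.

(* Split off a vertex carrying positive weight and renormalise the remaining
   weights. *)
Lemma extreme_point_hull_mem (S : pt R -> Prop) V x :
  (forall y, conv_hull V y -> S y) -> extreme_point S x -> conv_hull V x -> x \in V.
Proof.
move=> hullS [Sx x_ext] /conv_hullP [w wx]; have [j wj_gt0] := hull_weights_gt0 _ _ _ wx.
case: wx => w0 w1 xE.
set v := nth (0, 0) V j; set r := \sum_(i < size V | i != j) w i.
have vV : v \in V by apply: mem_nth.
have wj_r : w j + r = 1 by rewrite -w1 [in RHS](bigD1 j).
have r_ge0 : 0 <= r by apply: sumr_ge0.
have rest (f : pt R -> R) :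
    \sum_(i < size V) w i * f (nth (0, 0) V i)
    = w j * f v + \sum_(i < size V | i != j) w i * f (nth (0, 0) V i).
  by rewrite (bigD1 j).
have [r0|r_gt0] := eqVneq r 0.
  have wi0 i : i != j -> w i = 0.
    by move=> ij; move/psumr_eq0P: r0 => /(_ (fun i _ => w0 i)) /(_ i ij).
  have -> : x = v.
    rewrite xE !rest !big1 => [|i ij|i ij]; try by rewrite wi0 // mul0r.
    by rewrite !addr0 (_ : w j = 1) ?mul1r -?surjective_pairing //; lra.
  exact: vV.
have {}r_gt0 : 0 < r by rewrite lt_neqAle eq_sym r_gt0.
have r_neq0 : r != 0 by rewrite gt_eqF.
pose y : pt R := ((\sum_(i < size V | i != j) w i * (nth (0, 0) V i).1) / r,
                  (\sum_(i < size V | i != j) w i * (nth (0, 0) V i).2) / r).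
have Sy : S y.
  apply: hullS; apply/conv_hullP.
  exists (fun i => if i == j then 0 else w i / r); split.
  - by move=> i; case: ifP => _ //; rewrite divr_ge0.
  - rewrite (bigD1 j) //= eqxx add0r (eq_bigr (fun i => w i / r)).
      by rewrite -mulr_suml divff.
    by move=> i /negbTE ->.
  - rewrite /y; congr (_, _); rewrite [RHS](bigD1 j) //= eqxx mul0r add0r mulr_suml;
      by apply: eq_bigr => i /negbTE ->; rewrite mulrAC.
have t01 : 0 < r < 1 by apply/andP; split; lra.
have x_comb : x = padd (pscale (1 - r) v) (pscale r y).
  have -> : 1 - r = w j by lra.
  by rewrite xE !rest /padd /pscale /y /=; congr (_, _); rewrite [r * _]mulrC divfK.
by have [<- _] := x_ext v y r (hullS _ (conv_hull_mem _ _ vV)) Sy t01 x_comb.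
Qed.

End ConvexHull.

Arguments conv_hull_mem {R V x}.
Arguments conv_hull_halfplane {R V x}.
Arguments conv_hull_between {R V a b x}.
Arguments extreme_point_hull_mem {R S V x}.

Section ExtremePoints.
Variable R : realType.

Lemma convex_comb_eq0 (t a b : R) :
  0 < t < 1 -> 0 <= a -> 0 <= b -> (1 - t) * a + t * b = 0 -> a = 0 /\ b = 0.
Proof. by move=> /andP [t0 t1] a0 b0 ab0; split; nra. Qed.

Lemma extreme_point_two_faces (S : pt R -> Prop) (v : pt R) (a1 b1 c1 a2 b2 c2 : R) :
  S v -> a1 * b2 - a2 * b1 != 0 ->
  a1 * v.1 + b1 * v.2 = c1 -> a2 * v.1 + b2 * v.2 = c2 ->
  (forall y, S y -> c1 <= a1 * y.1 + b1 * y.2) ->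
  (forall y, S y -> a1 * y.1 + b1 * y.2 = c1 -> c2 <= a2 * y.1 + b2 * y.2) ->
  extreme_point S v.
Proof.
move=> Sv det v1 v2 face1 face2; split=> // y z t Sy Sz t01 vE.
have e1 : v.1 = (1 - t) * y.1 + t * z.1 by rewrite vE.
have e2 : v.2 = (1 - t) * y.2 + t * z.2 by rewrite vE.
have [y1 z1] : a1 * y.1 + b1 * y.2 - c1 = 0 /\ a1 * z.1 + b1 * z.2 - c1 = 0.
  apply: (convex_comb_eq0 _ _ _ t01); rewrite ?subr_ge0 ?face1 //.
  by rewrite -v1 e1 e2; ring.
have [y2 z2] : a2 * y.1 + b2 * y.2 - c2 = 0 /\ a2 * z.1 + b2 * z.2 - c2 = 0.
  apply: (convex_comb_eq0 _ _ _ t01); rewrite ?subr_ge0 ?face2 //; try lra.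
  by rewrite -v2 e1 e2; ring.
have unique w : a1 * w.1 + b1 * w.2 = c1 -> a2 * w.1 + b2 * w.2 = c2 -> w = v.
  move=> w1 w2; rewrite [w]surjective_pairing [v]surjective_pairing.
  have d1 : (a1 * b2 - a2 * b1) * (w.1 - v.1) =
      b2 * ((a1 * w.1 + b1 * w.2) - (a1 * v.1 + b1 * v.2))
      - b1 * ((a2 * w.1 + b2 * w.2) - (a2 * v.1 + b2 * v.2)) by ring.
  have d2 : (a1 * b2 - a2 * b1) * (w.2 - v.2) =
      a1 * ((a2 * w.1 + b2 * w.2) - (a2 * v.1 + b2 * v.2))
      - a2 * ((a1 * w.1 + b1 * w.2) - (a1 * v.1 + b1 * v.2)) by ring.
  move: d1 d2; rewrite w1 w2 v1 v2 !subrr !mulr0 subrr => /eqP + /eqP.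
  by rewrite !mulf_eq0 (negbTE det) !subr_eq0 => /eqP -> /eqP ->.
by split; apply: unique; lra.
Qed.

Lemma pt_neq (a b : pt R) :
  a.1 < b.1 \/ b.1 < a.1 \/ a.2 < b.2 \/ b.2 < a.2 -> a != b.
Proof. by case: a b => [a1 a2] [b1 b2] /= ab; apply/eqP => -[e1 e2]; lra. Qed.

End ExtremePoints.

Arguments extreme_point_two_faces {R S v}.

Lemma four_distinct_size (T : eqType) (s : seq T) (a b c d : T) :
  a \in s -> b \in s -> c \in s -> d \in s ->
  a != b -> a != c -> a != d -> b != c -> b != d -> c != d -> (4 <= size s)%N.
Proof.
move=> aV bV cV dV ab ac ad bc bd cd.
apply: (uniq_leq_size (s1 := [:: a; b; c; d])).
  by rewrite /= !inE !negb_or ab ac ad bc bd cd.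
by move=> x; rewrite !inE => /or4P [] /eqP ->.
Qed.

Arguments four_distinct_size {T s} a b c d.

Ltac case_ifs := repeat match goal with
  | |- context [if ?a <= ?b then _ else _] =>
      let ab := fresh "ab" in case: (lerP a b) => ab /=
  | H : context [if ?a <= ?b then _ else _] |- _ =>
      let ab := fresh "ab" in case: (lerP a b) H => ab H /=
  end.

Section CutBox.
Variables (R : realType) (w1 w2 L U : R).

Definition cut_box (y : pt R) : Prop :=
  0 <= y.1 /\ y.1 <= w1 /\ 0 <= y.2 /\ y.2 <= w2 /\ L <= y.1 + y.2 /\ y.1 + y.2 <= U.

Definition xmin : R := if L - w2 <= 0 then 0 else L - w2.
Definition xmax : R := if w1 <= U then w1 else U.
Definition ylo (a : R) : R := if L - a <= 0 then 0 else L - a.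
Definition yhi (a : R) : R := if w2 <= U - a then w2 else U - a.

Definition left_lo : pt R := (xmin, ylo xmin).
Definition left_hi : pt R := (xmin, yhi xmin).
Definition right_lo : pt R := (xmax, ylo xmax).
Definition right_hi : pt R := (xmax, yhi xmax).
Definition bottom_cut : pt R := (L, 0).
Definition top_cut : pt R := (U - w2, w2).
Definition has_bottom_cut : bool := (xmin < L) && (L < xmax).
Definition has_top_cut : bool := (xmin < U - w2) && (U - w2 < xmax).

Definition cut_box_corners : seq (pt R) :=
  [:: left_lo; left_hi; right_lo; right_hi]
  ++ (if has_bottom_cut then [:: bottom_cut] else [::])
  ++ (if has_top_cut then [:: top_cut] else [::]).

Definition cut_box_vertices : seq (pt R) := undup cut_box_corners.

Lemma cut_box_cornersP (P : pt R -> Prop) :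
  P left_lo -> P left_hi -> P right_lo -> P right_hi ->
  (has_bottom_cut -> P bottom_cut) -> (has_top_cut -> P top_cut) ->
  forall v, v \in cut_box_vertices -> P v.
Proof.
move=> Pll Plh Prl Prh Pb Pt v; rewrite mem_undup /cut_box_corners.
case: has_bottom_cut Pb => [/(_ isT) Pb|_]; case: has_top_cut Pt => [/(_ isT) Pt|_];
  rewrite !mem_cat !inE; by do ![case/orP|move/eqP->|by []].
Qed.

Lemma cut_box_vertices_size : (size cut_box_vertices <= 6)%N.
Proof.
apply: leq_trans (size_undup _) _; rewrite !size_cat.
by case: has_bottom_cut; case: has_top_cut.
Qed.

Lemma ylo_lin a : a <= L -> ylo a = L - a.
Proof. by rewrite /ylo; case: (lerP (L - a) 0); lra. Qed.

Lemma ylo_zero a : L <= a -> ylo a = 0.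
Proof. by rewrite /ylo; case: (lerP (L - a) 0); lra. Qed.

Lemma yhi_top a : a <= U - w2 -> yhi a = w2.
Proof. by rewrite /yhi; case: (lerP w2 (U - a)); lra. Qed.

Lemma yhi_lin a : U - w2 <= a -> yhi a = U - a.
Proof. by rewrite /yhi; case: (lerP w2 (U - a)); lra. Qed.

Definition cut_box_solid : Prop :=
  0 < w1 /\ 0 < w2 /\ L < U /\ L < w1 + w2 /\ 0 < U.

Hypothesis solid : cut_box_solid.

Lemma xmin_lt_xmax : xmin < xmax.
Proof. by have [?[?[?[??]]]] := solid; rewrite /xmin /xmax; case_ifs; lra. Qed.

Lemma ylo_le_yhi a : xmin <= a -> a <= xmax -> ylo a <= yhi a.
Proof. by have [?[?[?[??]]]] := solid; rewrite /xmin /xmax /ylo /yhi; case_ifs; lra. Qed.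

Lemma cut_boxE y :
  cut_box y <-> xmin <= y.1 /\ y.1 <= xmax /\ ylo y.1 <= y.2 /\ y.2 <= yhi y.1.
Proof.
have [?[?[?[??]]]] := solid; rewrite /cut_box /xmin /xmax /ylo /yhi.
by split=> [[?[?[?[?[??]]]]]|[?[?[??]]]]; case_ifs; lra.
Qed.

Lemma cut_box_graph a b :
  xmin <= a -> a <= xmax -> b = ylo a \/ b = yhi a -> cut_box (a, b).
Proof.
move=> a0 a1 b_graph; apply/cut_boxE => /=.
by have := ylo_le_yhi a a0 a1; case: b_graph => ->; lra.
Qed.

Lemma cut_box_vertices_in v : v \in cut_box_vertices -> cut_box v.
Proof.
have lt := xmin_lt_xmax; have [?[?[?[??]]]] := solid.
apply: cut_box_cornersP; try by apply: cut_box_graph; lra.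
- rewrite /has_bottom_cut /cut_box /xmin /xmax /= => /andP [].
  by case_ifs; lra.
- rewrite /has_top_cut /cut_box /xmin /xmax /= => /andP [].
  by case_ifs; lra.
Qed.

Lemma corners_mem :
  [/\ left_lo \in cut_box_vertices, left_hi \in cut_box_vertices,
      right_lo \in cut_box_vertices & right_hi \in cut_box_vertices].
Proof. by rewrite !mem_undup !mem_cat !inE !eqxx !orbT. Qed.

Lemma bottom_cut_mem : has_bottom_cut -> bottom_cut \in cut_box_vertices.
Proof. by move=> cut; rewrite mem_undup !mem_cat cut !inE eqxx !orbT. Qed.

Lemma top_cut_mem : has_top_cut -> top_cut \in cut_box_vertices.
Proof. by move=> cut; rewrite mem_undup !mem_cat cut !inE eqxx !orbT. Qed.

Lemma cut_box_vertices_extreme v : v \in cut_box_vertices -> extreme_point cut_box v.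
Proof.
have lt := xmin_lt_xmax; have [?[?[?[??]]]] := solid.
move=> vV; move: v vV (cut_box_vertices_in _ vV).
apply: (cut_box_cornersP (fun v => cut_box v -> extreme_point cut_box v))
  => [||||cut|cut] in_box.
- apply: (extreme_point_two_faces 1 0 xmin 0 1 (ylo xmin))
    => //=; try (apply/eqP; lra); try lra.
    by move=> y /cut_boxE; lra.
  by move=> y /cut_boxE yb y1; rewrite (_ : xmin = y.1); lra.
- apply: (extreme_point_two_faces 1 0 xmin 0 (-1) (- yhi xmin))
    => //=; try (apply/eqP; lra); try lra.
    by move=> y /cut_boxE; lra.
  by move=> y /cut_boxE yb y1; rewrite (_ : xmin = y.1); lra.
- apply: (extreme_point_two_faces (-1) 0 (- xmax) 0 1 (ylo xmax))
    => //=; try (apply/eqP; lra); try lra.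
    by move=> y /cut_boxE; lra.
  by move=> y /cut_boxE yb y1; rewrite (_ : xmax = y.1); lra.
- apply: (extreme_point_two_faces (-1) 0 (- xmax) 0 (-1) (- yhi xmax))
    => //=; try (apply/eqP; lra); try lra.
    by move=> y /cut_boxE; lra.
  by move=> y /cut_boxE yb y1; rewrite (_ : xmax = y.1); lra.
- apply: (extreme_point_two_faces 0 1 0 1 1 L)
    => //=; try (apply/eqP; lra); try lra.
    by move=> y; rewrite /cut_box; lra.
  by move=> y; rewrite /cut_box; lra.
- apply: (extreme_point_two_faces 0 (-1) (- w2) (-1) (-1) (- U))
    => //=; try (apply/eqP; lra); try lra.
    by move=> y; rewrite /cut_box; lra.
  by move=> y; rewrite /cut_box; lra.
Qed.

Lemma lower_boundary_hull a :
  xmin <= a -> a <= xmax -> conv_hull cut_box_vertices (a, ylo a).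
Proof.
have lt := xmin_lt_xmax; have [?[?[?[??]]]] := solid.
have [/conv_hull_mem ll _ /conv_hull_mem rl _] := corners_mem.
move=> a0 a1; case cut: has_bottom_cut.
  have /conv_hull_mem bc := bottom_cut_mem cut; move/andP: cut => [c0 c1].
  have [aL|La] := lerP a L.
    apply: (conv_hull_between (a - xmin) (L - xmin) ll bc) => /=; try lra.
    by rewrite (ylo_lin _ aL) ylo_lin; [ring|lra].
  apply: (conv_hull_between (a - L) (xmax - L) bc rl) => /=; try lra.
  by rewrite ylo_zero ?ylo_zero; [ring|lra|lra].
apply: (conv_hull_between (a - xmin) (xmax - xmin) ll rl) => /=; try lra.
move/negbT: cut; rewrite /has_bottom_cut negb_and -!leNgt => /orP [Lx|xL].
  by rewrite !ylo_zero; [ring|lra|lra|lra].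
by rewrite !ylo_lin; [ring|lra|lra|lra].
Qed.

Lemma upper_boundary_hull a :
  xmin <= a -> a <= xmax -> conv_hull cut_box_vertices (a, yhi a).
Proof.
have lt := xmin_lt_xmax; have [?[?[?[??]]]] := solid.
have [_ /conv_hull_mem lh _ /conv_hull_mem rh] := corners_mem.
move=> a0 a1; case cut: has_top_cut.
  have /conv_hull_mem tc := top_cut_mem cut; move/andP: cut => [c0 c1].
  have [aU|Ua] := lerP a (U - w2).
    apply: (conv_hull_between (a - xmin) (U - w2 - xmin) lh tc) => /=; try lra.
    by rewrite !yhi_top; [ring|lra|lra].
  apply: (conv_hull_between (a - (U - w2)) (xmax - (U - w2)) tc rh) => /=; try lra.
  by rewrite !yhi_lin; [ring|lra|lra].
apply: (conv_hull_between (a - xmin) (xmax - xmin) lh rh) => /=; try lra.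
move/negbT: cut; rewrite /has_top_cut negb_and -!leNgt => /orP [Ux|xU].
  by rewrite !yhi_lin; [ring|lra|lra|lra].
by rewrite !yhi_top; [ring|lra|lra|lra].
Qed.

Lemma cut_box_hullE y : cut_box y <-> conv_hull cut_box_vertices y.
Proof.
split=> [/cut_boxE [y0 [y1 [lo hi]]]|hull_y].
  have low := lower_boundary_hull _ y0 y1; have up := upper_boundary_hull _ y0 y1.
  have [lo_hi|] := ltrP (ylo y.1) (yhi y.1).
    by apply: (conv_hull_between (y.2 - ylo y.1) (yhi y.1 - ylo y.1) low up) => /=;
      rewrite ?subrr ?mul0r ?mulr0 //; lra.
  by move=> hi_lo; rewrite [y]surjective_pairing (_ : y.2 = ylo y.1) //; lra.
have half a b c : (forall v, cut_box v -> a * v.1 + b * v.2 <= c) ->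
    a * y.1 + b * y.2 <= c.
  by move=> H; apply: conv_hull_halfplane hull_y => v /cut_box_vertices_in /H.
have [h1 h2 h3] : [/\ -1 * y.1 + 0 * y.2 <= 0, 1 * y.1 + 0 * y.2 <= w1
                     & 0 * y.1 + -1 * y.2 <= 0].
  by split; apply: half; rewrite /cut_box => v; lra.
have [h4 h5 h6] : [/\ 0 * y.1 + 1 * y.2 <= w2, -1 * y.1 + -1 * y.2 <= - L
                     & 1 * y.1 + 1 * y.2 <= U].
  by split; apply: half; rewrite /cut_box => v; lra.
by rewrite /cut_box; lra.
Qed.


Lemma left_edge_degenerateE : (yhi xmin <= ylo xmin) = (w2 <= L).
Proof.
have [?[?[?[??]]]] := solid.
by rewrite /xmin /ylo /yhi; case_ifs; apply/idP/idP; lra.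
Qed.

Lemma right_edge_degenerateE : (yhi xmax <= ylo xmax) = (U <= w1).
Proof.
have [?[?[?[??]]]] := solid.
by rewrite /xmax /ylo /yhi; case_ifs; apply/idP/idP; lra.
Qed.

Lemma no_bottom_cut : ~~ has_bottom_cut -> L <= 0 \/ w1 <= L.
Proof.
have [?[?[?[??]]]] := solid.
by rewrite /has_bottom_cut /xmin /xmax negb_and -!leNgt; case_ifs; lra.
Qed.

Lemma no_top_cut : ~~ has_top_cut -> U <= w2 \/ w1 + w2 <= U.
Proof.
have [?[?[?[??]]]] := solid.
by rewrite /has_top_cut /xmin /xmax negb_and -!leNgt; case_ifs; lra.
Qed.

(* The two conditions exclude the triangles cut off near the corners
   [(w1, w2)] and [(0, 0)] of the box. *)
Lemma cut_box_vertices_size_ge4 :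
  L < w1 \/ L < w2 \/ U < w1 + w2 -> w1 < U \/ w2 < U \/ 0 < L ->
  (4 <= size cut_box_vertices)%N.
Proof.
move=> not_top not_bottom; have lt := xmin_lt_xmax; have [?[?[?[??]]]] := solid.
have [ll lh rl rh] := corners_mem.
have [left|left] := ltrP (ylo xmin) (yhi xmin);
  have [right|right] := ltrP (ylo xmax) (yhi xmax).
- apply: (four_distinct_size left_lo left_hi right_lo right_hi) => //;
    by apply: pt_neq => /=; lra.
- have U_le_w1 : U <= w1 by rewrite -right_edge_degenerateE.
  have L_lt_w2 : L < w2 by rewrite ltNge -left_edge_degenerateE -ltNge.
  case cut: has_bottom_cut.
    have bV := bottom_cut_mem cut; move/andP: cut => [c0 c1].
    apply: (four_distinct_size left_lo left_hi right_lo bottom_cut) => //;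
      by apply: pt_neq => /=; lra.
  case cut': has_top_cut.
    have tV := top_cut_mem cut'; move/andP: cut' => [c0 c1].
    apply: (four_distinct_size left_lo left_hi right_lo top_cut) => //;
      by apply: pt_neq => /=; lra.
  by move: (no_bottom_cut (negbT cut)) (no_top_cut (negbT cut')); lra.
- have w2_le_L : w2 <= L by rewrite -left_edge_degenerateE.
  have w1_lt_U : w1 < U by rewrite ltNge -right_edge_degenerateE -ltNge.
  case cut: has_bottom_cut.
    have bV := bottom_cut_mem cut; move/andP: cut => [c0 c1].
    apply: (four_distinct_size left_lo right_lo right_hi bottom_cut) => //;
      by apply: pt_neq => /=; lra.
  case cut': has_top_cut.
    have tV := top_cut_mem cut'; move/andP: cut' => [c0 c1].
    apply: (four_distinct_size left_lo right_lo right_hi top_cut) => //;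
      by apply: pt_neq => /=; lra.
  by move: (no_bottom_cut (negbT cut)) (no_top_cut (negbT cut')); lra.
- have w2_le_L : w2 <= L by rewrite -left_edge_degenerateE.
  have U_le_w1 : U <= w1 by rewrite -right_edge_degenerateE.
  case cut: has_bottom_cut; last by move: (no_bottom_cut (negbT cut)); lra.
  case cut': has_top_cut; last by move: (no_top_cut (negbT cut')); lra.
  have bV := bottom_cut_mem cut; have tV := top_cut_mem cut'.
  move/andP: cut => [c0 c1]; move/andP: cut' => [c2 c3].
  apply: (four_distinct_size left_lo right_lo bottom_cut top_cut) => //;
    by apply: pt_neq => /=; lra.
Qed.

Lemma cut_box_polygon :
  L < w1 \/ L < w2 \/ U < w1 + w2 -> w1 < U \/ w2 < U \/ 0 < L ->
  exists n, (4 <= n <= 6)%N /\ convex_polygon_with cut_box n.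
Proof.
move=> not_top not_bottom; exists (size cut_box_vertices); split.
  by rewrite cut_box_vertices_size_ge4 // cut_box_vertices_size.
exists cut_box_vertices; split; first exact: undup_uniq.
split=> //; split=> x; first exact: cut_box_hullE.
split=> [x_ext|]; last exact: cut_box_vertices_extreme.
apply: (extreme_point_hull_mem _ x_ext); first by move=> y /cut_box_hullE.
by apply/cut_box_hullE; case: x_ext.
Qed.

End CutBox.

Arguments cut_box_polygon {R w1 w2 L U}.

Section AffineMaps.
Variable R : realType.

Definition aff (a b c d e f : R) (x : pt R) : pt R :=
  (a * x.1 + b * x.2 + e, c * x.1 + d * x.2 + f).

Lemma aff_comb a b c d e f (y z : pt R) t :
  aff a b c d e f (padd (pscale (1 - t) y) (pscale t z)) =
  padd (pscale (1 - t) (aff a b c d e f y)) (pscale t (aff a b c d e f z)).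
Proof. by rewrite /aff /padd /pscale /=; congr (_, _); ring. Qed.

Lemma conv_hull_aff a b c d e f (V : seq (pt R)) y :
  conv_hull V y -> conv_hull (map (aff a b c d e f) V) (aff a b c d e f y).
Proof.
move=> /conv_hullP [w [w0 w1 ->]]; apply/conv_hullP.
rewrite /hull_weights size_map; exists w; split=> //.
have sum_const k : \sum_(i < size V) w i * k = k by rewrite -mulr_suml w1 mul1r.
have sum_scale k (g : pt R -> R) : \sum_(i < size V) w i * (k * g (nth (0, 0) V i))
    = k * \sum_(i < size V) w i * g (nth (0, 0) V i).
  by rewrite mulr_sumr; apply: eq_bigr => i _; ring.
rewrite /aff /=; congr (_, _).
  rewrite -[in LHS](sum_const e) -(sum_scale a fst) -(sum_scale b snd) -!big_split /=.
  by apply: eq_bigr => i _; rewrite (nth_map (0, 0)) //=; ring.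
rewrite -[in LHS](sum_const f) -(sum_scale c fst) -(sum_scale d snd) -!big_split /=.
by apply: eq_bigr => i _; rewrite (nth_map (0, 0)) //=; ring.
Qed.

Lemma aff_bijective a b c d e f : a * d - b * c != 0 ->
  exists a' b' c' d' e' f', cancel (aff a b c d e f) (aff a' b' c' d' e' f')
                            /\ cancel (aff a' b' c' d' e' f') (aff a b c d e f).
Proof.
move=> det; set D := a * d - b * c.
exists (d / D), (- b / D), (- c / D), (a / D), (- (d * e - b * f) / D),
  (- (a * f - c * e) / D).
by split=> x; rewrite /aff /= [x in RHS]surjective_pairing; congr (_, _);
  rewrite /D; field.
Qed.

Lemma convex_polygon_with_aff (S : pt R -> Prop) n a b c d e f :
  a * d - b * c != 0 -> convex_polygon_with S n ->
  convex_polygon_with (fun x => S (aff a b c d e f x)) n.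
Proof.
move=> /(aff_bijective _ _ _ _ e f) [a' [b' [c' [d' [e' [f' [phiK psiK]]]]]]].
move=> [V [uV [sV [hullV extV]]]].
set phi := aff a b c d e f in phiK psiK *; set psi := aff a' b' c' d' e' f' in phiK psiK.
have phi_inj : injective phi := can_inj phiK.
have phiV : map phi (map psi V) = V by rewrite -map_comp (eq_map psiK) map_id.
exists (map psi V); split; first by rewrite (map_inj_uniq (can_inj psiK)).
split; first by rewrite size_map.
split=> x; split.
- by move=> /hullV /(conv_hull_aff a' b' c' d' e' f'); rewrite -/psi phiK.
- by move=> /(conv_hull_aff a b c d e f); rewrite -/phi phiV => /hullV.
- move=> [Sx x_ext]; rewrite -(mem_map phi_inj) phiV; apply/extV.
  split=> // y z t Sy Sz t01 xE.
  have := x_ext (psi y) (psi z) t; rewrite !psiK => /(_ Sy Sz t01) [].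
    by rewrite -[x]phiK xE /psi aff_comb.
  by move=> yE zE; rewrite -[y]psiK -[z]psiK yE zE.
- rewrite -(mem_map phi_inj) phiV => /extV [Sx x_ext]; split=> // y z t Sy Sz t01 xE.
  have phi_xE : phi x = padd (pscale (1 - t) (phi y)) (pscale t (phi z)).
    by rewrite xE /phi aff_comb.
  have [yE zE] := x_ext (phi y) (phi z) t Sy Sz t01 phi_xE.
  by split; apply: phi_inj.
Qed.

Lemma convex_polygon_with_ext (S S' : pt R -> Prop) n :
  (forall x, S x <-> S' x) -> convex_polygon_with S n -> convex_polygon_with S' n.
Proof.
move=> SS' [V [uV [sV [hullV extV]]]]; exists V; do 3 split=> //.
  by move=> x; rewrite -SS'.
move=> x; rewrite -extV.
by split=> -[/SS' Sx x_ext]; split=> // y z t /SS' Sy /SS' Sz; apply: x_ext.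
Qed.

End AffineMaps.

Arguments convex_polygon_with_ext {R S S' n}.

Section PlaneGeometry.
Variable R : realType.
Implicit Types (u v x ca cb cc : pt R).

Lemma dot_ge0 u : 0 <= dot u u.
Proof. by rewrite /dot; nra. Qed.

Lemma pnorm_sq u : pnorm u * pnorm u = dot u u.
Proof. by rewrite -expr2 sqr_sqrtr ?dot_ge0. Qed.

Lemma pnorm_psubC ca cb : pnorm (psub ca cb) = pnorm (psub cb ca).
Proof. by rewrite /pnorm /dot /psub /=; congr Num.sqrt; ring. Qed.

Lemma pnormZ (t : R) u : pnorm (pscale t u) = `|t| * pnorm u.
Proof.
rewrite /pnorm /dot /pscale /= -sqrtr_sqr -sqrtrM ?sqr_ge0 //.
by congr Num.sqrt; ring.
Qed.

Lemma lagrange_identity u v : dot u u * dot v v = dot u v * dot u v + cross u v * cross u v.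
Proof. by rewrite /dot /cross; ring. Qed.

Lemma cross_neq0_pnorm_gt0 u v : cross u v != 0 -> 0 < pnorm u /\ 0 < pnorm v.
Proof.
move=> uv; rewrite !sqrtr_gt0.
have := lagrange_identity u v; have := dot_ge0 u; have := dot_ge0 v.
have : 0 < cross u v * cross u v by rewrite -expr2 exprn_even_gt0.
by split; nra.
Qed.

Lemma dot_sq_le u v : dot u v * dot u v <= (pnorm u * pnorm u) * (pnorm v * pnorm v).
Proof.
rewrite !pnorm_sq lagrange_identity lerDl.
by rewrite -expr2 sqr_ge0.
Qed.

Lemma mul_le0_between (s a b : R) :
  a <= b -> (s - a) * (s - b) <= 0 <-> a <= s /\ s <= b.
Proof.
move=> ab; split=> [prod_le0|[sa sb]]; last by nra.
by split; rewrite leNgt; apply/negP => ?; nra.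
Qed.

Lemma sq_dist_chain ca cb cc :
  pnorm (psub cc ca) * pnorm (psub cc ca) =
  pnorm (psub cb ca) * pnorm (psub cb ca) + pnorm (psub cc cb) * pnorm (psub cc cb)
  + 2 * dot (psub cb ca) (psub cc cb).
Proof. by rewrite !pnorm_sq /dot /psub /=; ring. Qed.

Lemma cross_psub_chain ca cb cc :
  cross (psub cb ca) (psub cc cb) = cross (psub cb ca) (psub cc ca).
Proof. by rewrite /cross /psub /=; ring. Qed.

(* Measured by [dot _ (cb - ca)] from [ca], the boundary points [p_a] and
   [p_b] sit at [ra * d] and [d * d - rb * d], where [d = |cb - ca|]. *)
Lemma slabE ca ra cb rb x :
  0 < pnorm (psub cb ca) -> ra + rb <= pnorm (psub cb ca) ->
  slab ca ra cb rb x <->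
  ra * pnorm (psub cb ca) <= dot (psub x ca) (psub cb ca) /\
  dot (psub x ca) (psub cb ca)
    <= pnorm (psub cb ca) * pnorm (psub cb ca) - rb * pnorm (psub cb ca).
Proof.
set d := pnorm (psub cb ca) => d_gt0 rab; have d_neq0 : d != 0 by rewrite gt_eqF.
rewrite /slab /boundary_pt; cbv beta zeta; rewrite (pnorm_psubC ca cb) -/d.
set s := dot (psub x ca) (psub cb ca).
have -> : dot (psub x (padd ca (pscale (ra / d) (psub cb ca)))) (psub cb ca)
    = s - ra / d * dot (psub cb ca) (psub cb ca).
  by rewrite /s /dot /psub /padd /pscale /=; ring.
have -> : dot (psub x (padd cb (pscale (rb / d) (psub ca cb)))) (psub cb ca)
    = s - dot (psub cb ca) (psub cb ca) + rb / d * dot (psub cb ca) (psub cb ca).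
  by rewrite /s /dot /psub /padd /pscale /=; ring.
have raE : ra / d * (d * d) = ra * d by field.
have rbE : rb / d * (d * d) = rb * d by field.
rewrite -pnorm_sq -/d raE rbE.
rewrite (_ : s - d * d + rb * d = s - (d * d - rb * d)); last by ring.
by apply: mul_le0_between; nra.
Qed.

Lemma disjoint_discs_dist ca ra cb rb :
  (forall x, ~ (disc ca ra x /\ disc cb rb x)) -> 0 < ra -> 0 < rb ->
  ra + rb < pnorm (psub cb ca).
Proof.
set d := pnorm (psub cb ca) => disjoint ra_gt0 rb_gt0.
rewrite ltNge; apply/negP => d_le.
have [d_le_ra|ra_lt_d] := lerP d ra.
  apply: (disjoint cb); split; first by rewrite /disc -/d.
  by rewrite /disc /pnorm /dot /psub /= !subrr !mul0r addr0 sqrtr0; lra.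
have d_neq0 : d != 0 by rewrite gt_eqF //; lra.
pose x := padd ca (pscale (ra / d) (psub cb ca)).
apply: (disjoint x); split; rewrite /disc.
  have -> : psub x ca = pscale (ra / d) (psub cb ca).
    by rewrite /x /psub /padd /pscale /=; congr (_, _); ring.
  by rewrite pnormZ -/d ger0_norm ?divfK // divr_ge0 //; lra.
have -> : psub x cb = pscale (ra / d - 1) (psub cb ca).
  by rewrite /x /psub /padd /pscale /=; congr (_, _); ring.
rewrite pnormZ -/d ler0_norm; last by rewrite subr_le0 ler_pdivrMr ?mul1r //; lra.
by rewrite (_ : - (ra / d - 1) * d = d - ra); [lra|field].
Qed.

End PlaneGeometry.

Arguments cross_neq0_pnorm_gt0 {R u v}.
Arguments slabE {R}.
Arguments disjoint_discs_dist {R ca ra cb rb}.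

Section TriangleInequalities.
Variable R : realType.

Lemma triangle_of_sq_dists (d1 d2 d3 e : R) :
  0 < d1 -> 0 < d2 -> 0 < d3 ->
  d3 * d3 = d1 * d1 + d2 * d2 + 2 * e -> e * e <= d1 * d1 * (d2 * d2) ->
  [/\ d3 <= d1 + d2, d1 <= d2 + d3 & d2 <= d1 + d3].
Proof.
move=> d1_gt0 d2_gt0 d3_gt0 d3_sq e_sq.
have d12 : 0 < d1 * d2 by rewrite mulr_gt0.
have e_le : e <= d1 * d2.
  rewrite leNgt; apply/negP => lt.
  have : (d1 * d2) * (d1 * d2) < e * e by clear -lt d12; nra.
  lra.
have e_ge : - (d1 * d2) <= e.
  rewrite leNgt; apply/negP => lt.
  have : (d1 * d2) * (d1 * d2) < e * e by clear -lt d12; nra.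
  lra.
split; rewrite leNgt; apply/negP => lt.
- have : (d1 + d2) * (d1 + d2) < d3 * d3 by clear -lt d1_gt0 d2_gt0; nra.
  lra.
- have : d3 * d3 < (d1 - d2) * (d1 - d2) by clear -lt d3_gt0 d2_gt0; nra.
  lra.
- have : d3 * d3 < (d2 - d1) * (d2 - d1) by clear -lt d3_gt0 d1_gt0; nra.
  lra.
Qed.

Section TangentSlacks.
Variables d1 d2 d3 sx sy sz : R.

Lemma slack_weighted_sum_gt0 :
  0 < d1 -> 0 < d2 -> 0 < d3 ->
  d3 <= d1 + d2 -> d1 <= d2 + d3 -> d2 <= d1 + d3 ->
  0 < sx + sy -> 0 < sy + sz -> 0 < sx + sz ->
  0 < sx * d3 + sy * d1 + sz * d2.
Proof.
move=> *.
case: (lerP sx 0) => ?.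
  have : 0 < (sy + sx) * d1 by nra. have : 0 < (sz + sx) * d2 by nra.
  have : 0 <= - sx * (d1 + d2 - d3) by nra. nra.
case: (lerP sy 0) => ?.
  have : 0 < (sx + sy) * d3 by nra. have : 0 < (sz + sy) * d2 by nra.
  have : 0 <= - sy * (d3 + d2 - d1) by nra. nra.
case: (lerP sz 0) => ?.
  have : 0 < (sx + sz) * d3 by nra. have : 0 < (sy + sz) * d1 by nra.
  have : 0 <= - sz * (d3 + d1 - d2) by nra. nra.
nra.
Qed.

Lemma slack_cycle_contra :
  0 < d1 -> 0 < d2 -> 0 < d3 ->
  d3 <= d1 + d2 -> d1 <= d2 + d3 -> d2 <= d1 + d3 ->
  0 < sx + sy -> 0 < sy + sz -> 0 < sx + sz ->
  sx * d3 + sy * (d1 - d2) <= 0 -> sz * d2 + sx * (d3 - d1) <= 0 ->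
  sy * d1 + sz * (d2 - d3) <= 0 -> False.
Proof.
move=> *.
case: (lerP sy 0) => ?; first nra.
case: (lerP sz 0) => ?; first nra.
case: (lerP sx 0) => ?.
  have : 0 < (sz + sx) * d2 by nra. have : 0 <= - sx * (d1 + d2 - d3) by nra. nra.
case: (lerP d2 d1) => ?. have : sy * (d2 - d1) <= 0 by nra. nra.
case: (lerP d1 d3) => ?. have : sx * (d1 - d3) <= 0 by nra. nra.
case: (lerP d3 d2) => ?. have : sz * (d3 - d2) <= 0 by nra. nra.
lra.
Qed.

End TangentSlacks.

End TriangleInequalities.

Arguments triangle_of_sq_dists {R d1 d2 d3 e}.
Arguments slack_weighted_sum_gt0 {R d1 d2 d3 sx sy sz}.
Arguments slack_cycle_contra {R d1 d2 d3 sx sy sz}.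

Definition slab_width (R : realType) (d r r' : R) : R := d * d - r * d - r' * d.
Definition diag_lo (R : realType) (d1 d2 d3 e ri rj : R) : R :=
  ri * d3 - ri * d1 - e - rj * d2.
Definition diag_hi (R : realType) (d1 d2 d3 e ri rj rk : R) : R :=
  d3 * d3 - rk * d3 - ri * d1 - e - rj * d2.

(* [sx], [sy], [sz] are the excesses over the radii of the tangent lengths of
   the triangle at its three vertices: disjointness of the discs says exactly
   that their pairwise sums are positive, and given the law of cosines
   [d3_sq] every bound on [w1], [w2], [L], [U] is linear in the slacks. *)
Section SlabBox.
Variables (R : realType) (d1 d2 d3 e ri rj rk : R).
Hypotheses (d1_gt0 : 0 < d1) (d2_gt0 : 0 < d2) (d3_gt0 : 0 < d3)
  (d3_sq : d3 * d3 = d1 * d1 + d2 * d2 + 2 * e)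
  (e_sq : e * e <= d1 * d1 * (d2 * d2))
  (rij : ri + rj < d1) (rjk : rj + rk < d2) (rik : ri + rk < d3).
Local Notation w1 := (slab_width R d1 ri rj).
Local Notation w2 := (slab_width R d2 rj rk).
Local Notation L := (diag_lo R d1 d2 d3 e ri rj).
Local Notation U := (diag_hi R d1 d2 d3 e ri rj rk).

Let sx := (d1 + d3 - d2) / 2 - ri.
Let sy := (d1 + d2 - d3) / 2 - rj.
Let sz := (d2 + d3 - d1) / 2 - rk.

Let triangle := triangle_of_sq_dists d1_gt0 d2_gt0 d3_gt0 d3_sq e_sq.

Let eE : e = (d3 * d3 - d1 * d1 - d2 * d2) / 2.
Proof. by rewrite d3_sq; field. Qed.

Let sxy : 0 < sx + sy. Proof. by move: rij; rewrite /sx /sy; lra. Qed.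
Let syz : 0 < sy + sz. Proof. by move: rjk; rewrite /sy /sz; lra. Qed.
Let sxz : 0 < sx + sz. Proof. by move: rik; rewrite /sx /sz; lra. Qed.

Lemma slab_box_solid : cut_box_solid R w1 w2 L U.
Proof.
have [t3 t1 t2] := triangle.
have w1E : w1 = d1 * (sx + sy) by rewrite /slab_width /sx /sy; field.
have w2E : w2 = d2 * (sy + sz) by rewrite /slab_width /sy /sz; field.
have ULE : U - L = d3 * (sx + sz) by rewrite /diag_hi /diag_lo /sx /sz; field.
have w12LE : w1 + w2 - L = sx * d3 + sy * d1 + sz * d2.
  by rewrite /slab_width /diag_lo eE /sx /sy /sz; field.
have UE : U = sx * d1 + sy * d2 + sz * d3.
  by rewrite /diag_hi eE /sx /sy /sz; field.
split; first by rewrite w1E mulr_gt0.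
split; first by rewrite w2E mulr_gt0.
split; first by rewrite -subr_gt0 ULE mulr_gt0.
split; first by rewrite -subr_gt0 w12LE (slack_weighted_sum_gt0 d1_gt0 d2_gt0 d3_gt0).
by rewrite UE (slack_weighted_sum_gt0 d2_gt0 d3_gt0 d1_gt0) // addrC.
Qed.

Lemma slab_box_not_top_triangle : L < w1 \/ L < w2 \/ U < w1 + w2.
Proof.
have [t3 t1 t2] := triangle.
have w1LE : w1 - L = sx * d3 + sy * (d1 - d2).
  by rewrite /slab_width /diag_lo eE /sx /sy; field.
have w2LE : w2 - L = sz * d2 + sx * (d3 - d1).
  by rewrite /slab_width /diag_lo eE /sx /sz; field.
have w12UE : w1 + w2 - U = sy * d1 + sz * (d2 - d3).
  by rewrite /slab_width /diag_hi eE /sy /sz; field.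
case: (ltrP L w1) => [|h1]; first by left.
case: (ltrP L w2) => [|h2]; first by right; left.
case: (ltrP U (w1 + w2)) => [|h3]; first by right; right.
exfalso; apply: (slack_cycle_contra d1_gt0 d2_gt0 d3_gt0 t3 t1 t2 sxy syz sxz).
- by rewrite -w1LE subr_le0.
- by rewrite -w2LE subr_le0.
- by rewrite -w12UE subr_le0.
Qed.

Lemma slab_box_not_bottom_triangle : w1 < U \/ w2 < U \/ 0 < L.
Proof.
have [t3 t1 t2] := triangle.
have Uw1E : U - w1 = sz * d3 + sy * (d2 - d1).
  by rewrite /slab_width /diag_hi eE /sy /sz; field.
have Uw2E : U - w2 = sx * d1 + sz * (d3 - d2).
  by rewrite /slab_width /diag_hi eE /sx /sz; field.
have LE : L = sy * d2 + sx * (d1 - d3) by rewrite /diag_lo eE /sx /sy; field.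
case: (ltrP w1 U) => [|h1]; first by left.
case: (ltrP w2 U) => [|h2]; first by right; left.
case: (ltrP 0 L) => [|h3]; first by right; right.
exfalso; apply: (slack_cycle_contra (sx := sz) (sy := sy) (sz := sx) d2_gt0 d1_gt0 d3_gt0)
  => //; try by rewrite addrC.
- by rewrite -Uw1E subr_le0.
- by rewrite -Uw2E subr_le0.
- by rewrite -LE.
Qed.

End SlabBox.

Arguments slab_box_solid {R d1 d2 d3 e ri rj rk}.
Arguments slab_box_not_top_triangle {R d1 d2 d3 e ri rj rk}.
Arguments slab_box_not_bottom_triangle {R d1 d2 d3 e ri rj rk}.

Section FeasibleRegion.
Variables (R : realType) (ci cj ck : pt R) (ri rj rk : R).
Local Notation d1 := (pnorm (psub cj ci)).
Local Notation d2 := (pnorm (psub ck cj)).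
Local Notation d3 := (pnorm (psub ck ci)).
Local Notation e := (dot (psub cj ci) (psub ck cj)).

(* [y1 / d1] is the position of [x] across [S_ij] measured from [l_i], and
   [y2 / d2] its position across [S_jk] measured from [l_j]. *)
Definition slab_coords : pt R -> pt R :=
  aff R (psub cj ci).1 (psub cj ci).2 (psub ck cj).1 (psub ck cj).2
    (- dot ci (psub cj ci) - ri * d1) (- dot cj (psub ck cj) - rj * d2).

Lemma feasible_region_coordsE x :
  0 < d1 -> 0 < d2 -> 0 < d3 -> ri + rj <= d1 -> rj + rk <= d2 -> ri + rk <= d3 ->
  cut_box R (slab_width R d1 ri rj) (slab_width R d2 rj rk)
    (diag_lo R d1 d2 d3 e ri rj) (diag_hi R d1 d2 d3 e ri rj rk) (slab_coords x)
  <-> slab ci ri cj rj x /\ slab cj rj ck rk x /\ slab ci ri ck rk x.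
Proof.
move=> d1_gt0 d2_gt0 d3_gt0 rij rjk rik.
have S1 := slabE ci ri cj rj x d1_gt0 rij.
have S2 := slabE cj rj ck rk x d2_gt0 rjk.
have S3 := slabE ci ri ck rk x d3_gt0 rik.
have X3 : dot (psub x ci) (psub ck ci)
    = dot (psub x ci) (psub cj ci) + dot (psub x cj) (psub ck cj) + e.
  by rewrite /dot /psub /=; ring.
have [y1E y2E] : (slab_coords x).1 = dot (psub x ci) (psub cj ci) - ri * d1 /\
                 (slab_coords x).2 = dot (psub x cj) (psub ck cj) - rj * d2.
  by split; rewrite /slab_coords /aff /dot /psub /=; ring.
rewrite X3 in S3; move: S1 S2 S3 y1E y2E.
set s1 := dot (psub x ci) _; set s2 := dot (psub x cj) _; set y := slab_coords x.
rewrite /cut_box /slab_width /diag_lo /diag_hi => S1 S2 S3 y1E y2E.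
split=> [box|[/S1 ? [/S2 ? /S3 ?]]]; last by lra.
by split; [apply/S1|split; [apply/S2|apply/S3]]; lra.
Qed.

Lemma convex_polygon_with_slab_coords (S : pt R -> Prop) n :
  cross (psub cj ci) (psub ck cj) != 0 -> convex_polygon_with S n ->
  convex_polygon_with (fun x => S (slab_coords x)) n.
Proof. exact: convex_polygon_with_aff. Qed.

End FeasibleRegion.

Arguments convex_polygon_with_slab_coords {R ci cj ck} ri rj {S n}.

Theorem theorem2 (R : realType) (ci cj ck : pt R) (ri rj rk : R) :
  0 < ri -> 0 < rj -> 0 < rk ->
  (forall x, ~ (disc ci ri x /\ disc cj rj x)) ->
  (forall x, ~ (disc cj rj x /\ disc ck rk x)) ->
  (forall x, ~ (disc ci ri x /\ disc ck rk x)) ->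
  cross (psub cj ci) (psub ck ci) != 0 ->
  exists n : nat, (4 <= n <= 6)%N /\
    convex_polygon_with
      (fun x => slab ci ri cj rj x /\ slab cj rj ck rk x /\ slab ci ri ck rk x) n.
Proof.
move=> ri_gt0 rj_gt0 rk_gt0 Dij Djk Dik ncol.
have ncol' : cross (psub cj ci) (psub ck cj) != 0 by rewrite cross_psub_chain.
have [dij_gt0 dik_gt0] := cross_neq0_pnorm_gt0 ncol.
have [_ djk_gt0] := cross_neq0_pnorm_gt0 ncol'.
have rij := disjoint_discs_dist Dij ri_gt0 rj_gt0.
have rjk := disjoint_discs_dist Djk rj_gt0 rk_gt0.
have rik := disjoint_discs_dist Dik ri_gt0 rk_gt0.
have d_sq := sq_dist_chain _ ci cj ck.
have e_sq := dot_sq_le _ (psub cj ci) (psub ck cj).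
have [n [n46 poly]] := cut_box_polygon
  (slab_box_solid dij_gt0 djk_gt0 dik_gt0 d_sq e_sq rij rjk rik)
  (slab_box_not_top_triangle dij_gt0 djk_gt0 dik_gt0 d_sq e_sq rij rjk rik)
  (slab_box_not_bottom_triangle dij_gt0 djk_gt0 dik_gt0 d_sq e_sq rij rjk rik).
exists n; split=> //.
apply: convex_polygon_with_ext (convex_polygon_with_slab_coords ri rj ncol' poly) => x.
by apply: feasible_region_coordsE; lra.
Qed.
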